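(* Let $0\le\alpha<n$, $m$ a nonnegative integer, $0<\eta\le1$, $0<\delta<\min\{\eta,(n-\alpha)/m\}$, $1\le r\le\infty$, $\tilde\alpha=m\delta+\alpha$, $\tilde\delta\le\delta$. Let $(w,v)$ be weights such that $v^{r'}$ satisfies a doubling condition. If there is $C$ such that for every ball $B$ with center $x_B$ $$|B|^{\frac{\delta-\tilde\delta}{n}}\Big(\int_{\mathbb{R}^n\setminus B}\frac{v^{r'}(y)}{|x_B-y|^{r'(n-\tilde\alpha+\delta)}}dy\Big)^{1/r'}\le C\frac{w(B)}{|B|},$$ then there is $C'$ such that for every ball $B$ $$|B|^{\frac{\tilde\alpha-\tilde\delta}{n}-\frac1r}\Big(\frac{1}{|B|}\int_Bv^{r'}(y)\,dy\Big)^{1/r'}\le C'\frac{w(B)}{|B|}.$$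
   Context: A weight is a nonnegative locally integrable function; $w(B)=\int_Bw$; $r'$ is the conjugate exponent of $r$. A weight $u$ is doubling if $\int_{2B}u\le C\int_Bu$ for all balls $B$, $2B$ being the concentric ball of twice the radius. If $m=0$, $(n-\alpha)/m$ is read as $+\infty$. *)

From HB Require Import structures.
From mathcomp Require Import all_boot all_order all_algebra.
From mathcomp Require Import all_classical all_reals all_analysis.
Set Implicit Arguments. Unset Strict Implicit. Unset Printing Implicit Defensive.
Import Order.TTheory GRing.Theory Num.Theory.
Import numFieldNormedType.Exports.
Local Open Scope classical_set_scope.
Local Open Scope ring_scope.
Local Open Scope ereal_scope.

(* R^n is modelled as n.-tuple R, with the product (Borel) sigma-algebra
   provided by mathcomp-analysis (measurable_tuple). *)

(* Lebesgue integral of a [0,+oo]-valued function on R^n, defined as the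
   iterated one-dimensional Lebesgue integral (Tonelli). *)
Fixpoint intn {R : realType} (n : nat) : (n.-tuple R -> \bar R) -> \bar R :=
  match n with
  | 0 => fun f => f [tuple]
  | n'.+1 => fun f =>
      \int[@lebesgue_measure R]_x intn (fun t : n'.-tuple R => f [tuple of x :: t])
  end.

Definition intn_on {R : realType} (n : nat) (E : set (n.-tuple R))
  (f : n.-tuple R -> \bar R) : \bar R :=
  intn (fun y => if y \in E then f y else 0).

Definition voln {R : realType} (n : nat) (E : set (n.-tuple R)) : \bar R :=
  intn_on E (fun _ => 1).

Definition nulln {R : realType} (n : nat) (N : set (n.-tuple R)) : Prop :=
  exists A : set (n.-tuple R), measurable A /\ N `<=` A /\ voln A = 0.

Definition ess_sup_on {R : realType} (n : nat) (E : set (n.-tuple R))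
  (g : n.-tuple R -> \bar R) : \bar R :=
  ereal_inf [set y : \bar R | nulln [set x | E x /\ y < g x]].

Definition euc_dist {R : realType} (n : nat) (x y : n.-tuple R) : R :=
  Num.sqrt (\sum_(i < n) (tnth x i - tnth y i) ^+ 2)%R.

Definition eball {R : realType} (n : nat) (x : n.-tuple R) (rho : R)
  : set (n.-tuple R) := [set y | (euc_dist x y < rho)%R].

Definition conj_exp {R : realType} (r : \bar R) : \bar R :=
  match r with
  | EFin r0 => if r0 == 1%R then +oo else EFin (r0 / (r0 - 1))%R
  | _ => 1
  end.

Definition inv_exp {R : realType} (r : \bar R) : R :=
  match r with
  | EFin r0 => r0^-1
  | _ => 0%R
  end.

From HB Require Import structures.
From mathcomp Require Import all_boot all_order all_algebra.
From mathcomp Require Import all_classical all_reals all_analysis.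
From mathcomp Require Import lra ring measurable_realfun.
Set Implicit Arguments. Unset Strict Implicit. Unset Printing Implicit Defensive.
Import Order.TTheory GRing.Theory Num.Theory.
Import numFieldNormedType.Exports.
Local Open Scope classical_set_scope.
Local Open Scope ring_scope.
Local Open Scope ereal_scope.

(* Let B = B(x, rho), s = n - alphat + delta > 0 and let z be the point at
   distance 2 rho from x along the first axis.  Then B is contained in
   B(z, 4 rho) while B(z, rho) lies in the annulus rho <= |x - y| < 3 rho, so
   doubling twice around z gives
     int_B v^r' <= C (3 rho)^(r' s) int_(R^n \ B) v^r'(y) / |x - y|^(r' s) dy
   (with ess sup in place of integrals when r = 1).  Inserting this into the
   hypothesis, the factor rho^s is absorbed by |B|^(-s/n) since |B| >= c rho^n,
   and the exponents of |B| match because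
     (alphat - deltat)/n - 1/r = (delta - deltat)/n + 1/r' - s/n. *)

Section ge0_integral_le_scale.
Context {R : realType} {d : measure_display} {T : measurableType d}.
Variable mu : {measure set T -> \bar R}.
Import HBNNSimple.

(* Unlike [ge0_le_integral], no measurability is needed: both sides are
   suprema over simple functions. *)
Lemma ge0_integral_le_scale (k : R) (f g : T -> \bar R) : (0 < k)%R ->
  (forall x, 0 <= f x) -> (forall x, f x <= k%:E * g x) ->
  \int[mu]_x f x <= k%:E * \int[mu]_x g x.
Proof.
move=> k0 f0 fg.
have g0 x : 0 <= g x.
  by rewrite -(@pmule_rge0 _ k%:E) ?lte_fin//; exact: le_trans (f0 x) (fg x).
have kV0 : (0 <= k^-1)%R by rewrite invr_ge0 ltW.
rewrite !ge0_integralTE//; apply: ge_ereal_sup => _ [h /= hf <-].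
pose h' := scale_nnsfun h kV0.
have -> : sintegral mu h = k%:E * sintegral mu h'.
  rewrite -sintegralrM; apply: eq_sintegral => x /=.
  by rewrite mulrA divff ?mul1r// gt_eqF.
rewrite lee_pmul2l ?lte_fin//; apply: ereal_sup_ubound; exists h' => //= x.
rewrite -(@lee_pmul2l _ k%:E) ?lte_fin// -EFinM mulrA divff ?mul1r ?gt_eqF//.
exact: le_trans (hf x) (fg x).
Qed.

End ge0_integral_le_scale.

Section intn.
Context {R : realType}.

Lemma intn_ge0 n (f : n.-tuple R -> \bar R) : (forall y, 0 <= f y) -> 0 <= intn f.
Proof.
elim: n f => [|n IH] f f0 /=; first exact: f0.
by apply: integral_ge0 => x _; apply: IH.
Qed.

Lemma intn_le_scale n (k : R) (f g : n.-tuple R -> \bar R) : (0 < k)%R ->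
  (forall y, 0 <= f y) -> (forall y, f y <= k%:E * g y) -> intn f <= k%:E * intn g.
Proof.
elim: n f g => [|n IH] f g k0 f0 fg /=; first exact: fg.
by apply: ge0_integral_le_scale => // x; [exact: intn_ge0 | exact: IH].
Qed.

Lemma intn0 n : intn (fun _ : n.-tuple R => 0) = 0.
Proof.
elim: n => [|n IH] //=.
by rewrite (_ : (fun x : R => _) = cst 0) ?integral0//; apply: funext => x.
Qed.

Lemma intn_on_ge0 n (E : set (n.-tuple R)) (f : n.-tuple R -> \bar R) :
  (forall y, 0 <= f y) -> 0 <= intn_on E f.
Proof. by move=> f0; apply: intn_ge0 => y; case: ifP. Qed.

Lemma intn_on_le_scale n (E F : set (n.-tuple R)) (k : R) (f g : n.-tuple R -> \bar R) :
  (0 < k)%R -> E `<=` F -> (forall y, 0 <= f y) -> (forall y, 0 <= g y) ->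
  (forall y, E y -> f y <= k%:E * g y) -> intn_on E f <= k%:E * intn_on F g.
Proof.
move=> k0 EF f0 g0 fg; apply: intn_le_scale => // y; first by case: ifP.
case: ifPn => [/set_mem Ey|_]; first by rewrite (mem_set (EF _ Ey)); exact: fg.
by apply: mule_ge0; [rewrite lee_fin ltW | case: ifP].
Qed.

Lemma voln_le n (E F : set (n.-tuple R)) : E `<=` F -> voln E <= voln F.
Proof.
by move=> EF; rewrite -[voln F]mul1e; apply: intn_on_le_scale => // y; rewrite mul1e.
Qed.

End intn.

Section cube.
Context {R : realType}.

Definition cube {n} (x : n.-tuple R) (h : R) : set (n.-tuple R) :=
  [set y | forall i, (`|tnth y i - tnth x i| < h)%R].

Lemma mem_cube_cons n (x0 t h : R) (x u : n.-tuple R) :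
  ([tuple of t :: u] \in cube [tuple of x0 :: x] h) =
  (`|t - x0| < h)%R && (u \in cube x h).
Proof.
apply/idP/andP => [/set_mem cu|[t0 /set_mem cu]].
  split; first by have := cu ord0; rewrite !tnth0.
  by apply/mem_set => j; have := cu (lift ord0 j); rewrite !tnthS.
by apply/mem_set => i; case: (unliftP ord0 i) => [j ->|->]; rewrite ?tnthS ?tnth0.
Qed.

Lemma voln_cube n (x : n.-tuple R) (h : R) : (0 < h)%R ->
  voln (cube x h) = ((2 * h) ^+ n)%:E.
Proof.
move=> h0; rewrite /voln /intn_on; elim: n x => [|n IH] x /=.
  by rewrite expr0 ifT//; apply/mem_set => -[].
rewrite [x]tuple_eta; set x0 := thead x; set xs := [tuple of behead x].
pose A := [set` `](x0 - h)%R, (x0 + h)%R[] : set R.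
have memA t : (t \in A) = (`|t - x0| < h)%R.
  by rewrite /A mem_setE in_itv /= distrC ltr_distlC.
have inner t : intn (fun u => if [tuple of t :: u] \in cube [tuple of x0 :: xs] h
                              then 1 else 0) = ((2 * h) ^+ n)%:E * (\1_A t)%:E.
  rewrite indicE memA (_ : (fun u => _) =
    fun u => if (`|t - x0| < h)%R && (u \in cube xs h) then 1 else 0); last first.
    by apply: funext => u; rewrite mem_cube_cons.
  by case: (`|t - x0| < h)%R; rewrite ?mule1 ?IH// mule0 intn0.
rewrite (eq_fun inner) ge0_integralZl_EFin //; last 2 first.
- by apply/measurable_EFinP; apply: measurable_indic; exact: measurable_itv.
- by rewrite exprn_ge0 // mulr_ge0 // ltW.
rewrite integral_indic ?setIT //=; last exact: measurable_itv.
rewrite lebesgue_measure_itv /= lte_fin ifT; last by lra.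
by rewrite -EFinD -EFinM exprS mulrC; congr (_ * _)%:E; lra.
Qed.

End cube.

Section euclidean_geometry.
Context {R : realType}.
Local Open Scope ring_scope.

Definition sqdist {n} (x y : n.-tuple R) : R := \sum_(i < n) (tnth x i - tnth y i) ^+ 2.

Lemma sqdist_ge0 n (x y : n.-tuple R) : 0 <= sqdist x y.
Proof. by apply: sumr_ge0 => i _; exact: sqr_ge0. Qed.

Lemma euc_dist_lt n (x y : n.-tuple R) (rho : R) : 0 < rho ->
  (euc_dist x y < rho) = (sqdist x y < rho ^+ 2).
Proof.
by move=> rho0; rewrite -[rho in LHS]ger0_norm ?ltW// -sqrtr_sqr ltr_sqrt ?exprn_gt0.
Qed.

Lemma euc_dist_ge n (x y : n.-tuple R) (rho : R) : 0 <= rho ->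
  (rho <= euc_dist x y) = (rho ^+ 2 <= sqdist x y).
Proof.
by move=> rho0; rewrite -[rho in LHS]ger0_norm// -sqrtr_sqr ler_sqrt ?sqdist_ge0.
Qed.

Lemma cube_sub_eball n (x : n.+1.-tuple R) (rho : R) : 0 < rho ->
  cube x (rho / (2 * n.+1%:R)) `<=` eball x rho.
Proof.
move=> rho0 y xy; rewrite /eball /= euc_dist_lt//.
set h := rho / _ in xy.
have h0 : 0 < h by rewrite divr_gt0.
have rhoE : rho = 2 * n.+1%:R * h by rewrite /h mulrC divfK.
apply: (@le_lt_trans _ _ (\sum_(i < n.+1) h ^+ 2)).
  apply: ler_sum => i _; have := xy i; rewrite distrC ltr_norml => /andP[? ?]; nra.
rewrite sumr_const card_ord -mulr_natr rhoE.
have n1 : 1 <= n.+1%:R :> R by rewrite ler1n.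
set N := n.+1%:R in n1 *; nra.
Qed.

Lemma eball_sub_cube n (x : n.-tuple R) (rho : R) : eball x rho `<=` cube x rho.
Proof.
move=> y; rewrite /eball /= => xy i.
rewrite distrC -sqrtr_sqr; apply: le_lt_trans xy; rewrite ler_sqrt ?sqdist_ge0//.
by rewrite [leRHS](bigD1 i)//= lerDl; apply: sumr_ge0 => j _; exact: sqr_ge0.
Qed.

Lemma sqr_tnth0_le_sqdist n (x y : n.+1.-tuple R) :
  (tnth x ord0 - tnth y ord0) ^+ 2 <= sqdist x y.
Proof. by rewrite /sqdist big_ord_recl lerDl; apply: sumr_ge0 => j _; exact: sqr_ge0. Qed.

Definition annulus_center {n} (x : n.+1.-tuple R) (rho : R) : n.+1.-tuple R :=
  [tuple if i == ord0 then tnth x i + 2 * rho else tnth x i | i < n.+1].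

Lemma sqdist_annulus_center n (x y : n.+1.-tuple R) (rho : R) :
  sqdist (annulus_center x rho) y =
  sqdist x y + 4 * rho * (tnth x ord0 - tnth y ord0) + 4 * rho ^+ 2.
Proof.
rewrite /sqdist !big_ord_recl /annulus_center tnth_mktuple eqxx.
rewrite (eq_bigr (fun j : 'I_n => (tnth x (lift ord0 j) - tnth y (lift ord0 j)) ^+ 2)).
  by ring.
by move=> j _; rewrite tnth_mktuple.
Qed.

Lemma eball_sub_annulus_center n (x : n.+1.-tuple R) (rho : R) : 0 < rho ->
  eball x rho `<=` eball (annulus_center x rho) (4 * rho).
Proof.
move=> rho0 y; have rho4 : 0 < 4 * rho by rewrite mulr_gt0.
rewrite /eball /= !euc_dist_lt// sqdist_annulus_center.
have := sqr_tnth0_le_sqdist x y.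
move: (sqdist x y) (tnth x ord0 - tnth y ord0) => D a aD DR.
have : a < rho by nra.
nra.
Qed.

Lemma annulus_center_eball n (x : n.+1.-tuple R) (rho : R) : 0 < rho ->
  eball (annulus_center x rho) rho `<=` [set y | rho <= euc_dist x y < 3 * rho].
Proof.
move=> rho0 y; have rho3 : 0 < 3 * rho by rewrite mulr_gt0.
rewrite /eball /= (euc_dist_ge _ _ (ltW rho0)) !euc_dist_lt// sqdist_annulus_center.
have := sqr_tnth0_le_sqdist x y.
move: (sqdist x y) (tnth x ord0 - tnth y ord0) => D a aD DR.
have : - 3 * rho < a < - rho by apply/andP; split; nra.
by case/andP => ? ?; apply/andP; split; nra.
Qed.

End euclidean_geometry.

Section voln_eball.
Context {R : realType}.

Lemma voln_eball_ge n (x : n.+1.-tuple R) (rho : R) : (0 < rho)%R ->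
  ((rho / n.+1%:R) ^+ n.+1)%:E <= voln (eball x rho).
Proof.
move=> rho0; have h0 : (0 < rho / (2 * n.+1%:R))%R by rewrite divr_gt0.
have -> : (rho / n.+1%:R = 2 * (rho / (2 * n.+1%:R)))%R by field.
by rewrite -(voln_cube x)//; apply: voln_le; exact: cube_sub_eball.
Qed.

Lemma voln_eball_fin_num n (x : n.-tuple R) (rho : R) : (0 < rho)%R ->
  voln (eball x rho) \is a fin_num.
Proof.
move=> rho0; rewrite ge0_fin_numE; last exact: intn_on_ge0.
by apply: le_lt_trans (voln_le (@eball_sub_cube _ _ x rho)) _; rewrite voln_cube// ltry.
Qed.

Lemma fine_voln_eball_ge n (x : n.+1.-tuple R) (rho : R) : (0 < rho)%R ->
  ((n.+1%:R^-1 * rho) `^ n.+1%:R <= fine (voln (eball x rho)))%R.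
Proof.
move=> rho0; rewrite powR_mulrn ?mulr_ge0 ?invr_ge0 ?(ltW rho0)// mulrC.
by rewrite -lee_fin fineK ?voln_eball_fin_num ?voln_eball_ge.
Qed.

Lemma fine_voln_eball_gt0 n (x : n.+1.-tuple R) (rho : R) : (0 < rho)%R ->
  (0 < fine (voln (eball x rho)))%R.
Proof.
move=> rho0; apply: lt_le_trans (fine_voln_eball_ge x rho0).
by rewrite powR_gt0// mulr_gt0 ?invr_gt0.
Qed.

Lemma intn_on_average_ge0 n (E : set (n.-tuple R)) (f : n.-tuple R -> \bar R) :
  (forall y, 0 <= f y) -> 0 <= intn_on E f * ((fine (voln E))^-1)%:E.
Proof.
move=> f0; apply: mule_ge0; first exact: intn_on_ge0.
by rewrite lee_fin invr_ge0 fine_ge0// intn_on_ge0.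
Qed.

End voln_eball.

Section ess_sup_on.
Context {R : realType} {n : nat}.
Implicit Types (E F : set (n.-tuple R)) (f g : n.-tuple R -> \bar R).

Lemma ess_sup_on_le_scale E F f g (k : R) : (0 < k)%R -> E `<=` F ->
  (forall y, E y -> f y <= k%:E * g y) -> ess_sup_on E f <= k%:E * ess_sup_on F g.
Proof.
move=> k0 EF fg; rewrite -lee_pdivrMl//; apply: le_ereal_inf_tmp => z /= [A [mA [FA A0]]].
rewrite lee_pdivrMl//; apply: ereal_inf_lbound; exists A; split => //; split => // y [Ey zy].
apply: FA; split; first exact: EF.
by rewrite -(@lte_pmul2l _ k%:E) ?lte_fin//; exact: lt_le_trans zy (fg _ Ey).
Qed.

Lemma ess_sup_on_ge0 E f : 0 < voln E -> (forall y, 0 <= f y) -> 0 <= ess_sup_on E f.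
Proof.
move=> E0 f0; apply: le_ereal_inf_tmp => z /= [A [mA [EA A0]]].
rewrite leNgt; apply/negP => z0.
have : voln E <= voln A.
  by apply: voln_le => y Ey; apply: EA; split => //; exact: lt_le_trans z0 (f0 y).
by rewrite A0 leNgt E0.
Qed.

End ess_sup_on.

Section doubling_tail.
Context {R : realType} {n : nat}.
(* [Phi E f] stands for the integral of f over E, or for its ess sup over E. *)
Variable Phi : set (n.+1.-tuple R) -> (n.+1.-tuple R -> R) -> \bar R.
Hypothesis Phi_le_scale : forall E F (f g : n.+1.-tuple R -> R) (k : R),
  (0 < k)%R -> E `<=` F -> (forall y, 0 <= f y)%R -> (forall y, 0 <= g y)%R ->
  (forall y, E y -> f y <= k * g y)%R -> Phi E f <= k%:E * Phi F g.
Hypothesis Phi_eball_ge0 : forall x (rho : R) (f : n.+1.-tuple R -> R),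
  (0 < rho)%R -> (forall y, 0 <= f y)%R -> 0 <= Phi (eball x rho) f.

Lemma doubling_le_tail (f : n.+1.-tuple R -> R) (Cd t : R) x (rho : R) :
  (0 < rho)%R -> (0 <= t)%R -> (forall y, 0 <= f y)%R ->
  (forall x (rho : R), (0 < rho)%R ->
     Phi (eball x (2 * rho)) f <= Cd%:E * Phi (eball x rho) f) ->
  Phi (eball x rho) f <=
  (Num.max Cd 0 ^+ 2 * 3 `^ t * rho `^ t)%:E *
  Phi (~` eball x rho) (fun y => f y / euc_dist x y `^ t)%R.
Proof.
move=> rho0 t0 f0 dbl; set z := annulus_center x rho; set Cm := Num.max Cd 0%R.
have Cm0 : (0 <= Cm)%R by rewrite le_max lexx orbT.
have dblm y (s : R) : (0 < s)%R ->
    Phi (eball y (2 * s)) f <= Cm%:E * Phi (eball y s) f.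
  move=> s0; apply: le_trans (dbl y s s0) _; apply: lee_wpmul2r.
    exact: Phi_eball_ge0.
  by rewrite lee_fin le_max lexx.
have rho2 : (0 < 2 * rho)%R by rewrite mulr_gt0.
have near : Phi (eball x rho) f <= Phi (eball z (2 * (2 * rho))) f.
  rewrite -[leRHS]mul1e; apply: Phi_le_scale => // [|y _]; last by rewrite mul1r.
  by rewrite mulrA -natrM; exact: eball_sub_annulus_center.
have far : Phi (eball z rho) f <=
    (3 `^ t * rho `^ t)%:E * Phi (~` eball x rho) (fun y => f y / euc_dist x y `^ t)%R.
  apply: Phi_le_scale => [||//|y|y /(annulus_center_eball rho0)/andP[xy1 xy3]].
  - by rewrite mulr_gt0 ?powR_gt0.
  - move=> y /(annulus_center_eball rho0)/andP[xy1 _].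
    by rewrite /eball /setC /= => /(le_lt_trans xy1); rewrite ltxx.
  - by rewrite divr_ge0 ?powR_ge0.
  have dxy0 : (0 < euc_dist x y `^ t)%R by rewrite powR_gt0// (lt_le_trans rho0).
  rewrite mulrA ler_pdivlMr// mulrC ler_wpM2r// -powRM ?ler0n ?(ltW rho0)//.
  by apply: ge0_ler_powR; rewrite ?nnegrE ?sqrtr_ge0 ?mulr_ge0 ?ler0n ?(ltW rho0) ?(ltW xy3).
apply: (le_trans near); apply: (le_trans (dblm _ _ rho2)).
rewrite -mulrA EFinM expr2 EFinM -!muleA; apply: lee_wpmul2l; first by rewrite lee_fin.
apply: (le_trans (dblm _ _ rho0)); apply: lee_wpmul2l; first by rewrite lee_fin.
exact: far.
Qed.

End doubling_tail.

Section doubling_le_tail_instances.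
Context {R : realType} {n : nat}.
Implicit Types (x : n.+1.-tuple R) (f : n.+1.-tuple R -> R).

Lemma intn_on_doubling_le_tail f (Cd t : R) x (rho : R) :
  (0 < rho)%R -> (0 <= t)%R -> (forall y, 0 <= f y)%R ->
  (forall x (rho : R), (0 < rho)%R ->
     intn_on (eball x (2 * rho)) (fun y => (f y)%:E)
     <= Cd%:E * intn_on (eball x rho) (fun y => (f y)%:E)) ->
  intn_on (eball x rho) (fun y => (f y)%:E) <=
  (Num.max Cd 0 ^+ 2 * 3 `^ t * rho `^ t)%:E *
  intn_on (~` eball x rho) (fun y => (f y / euc_dist x y `^ t)%:E).
Proof.
apply: (@doubling_le_tail _ _ (fun E f => intn_on E (fun y => (f y)%:E))).
- by move=> E F g h k k0 EF g0 h0 gh; apply: intn_on_le_scale => // y; rewrite lee_fin.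
- by move=> z s g _ g0; apply: intn_on_ge0 => y; rewrite lee_fin.
Qed.

Lemma ess_sup_on_doubling_le_tail f (Cd t : R) x (rho : R) :
  (0 < rho)%R -> (0 <= t)%R -> (forall y, 0 <= f y)%R ->
  (forall x (rho : R), (0 < rho)%R ->
     ess_sup_on (eball x (2 * rho)) (fun y => (f y)%:E)
     <= Cd%:E * ess_sup_on (eball x rho) (fun y => (f y)%:E)) ->
  ess_sup_on (eball x rho) (fun y => (f y)%:E) <=
  (Num.max Cd 0 ^+ 2 * 3 `^ t * rho `^ t)%:E *
  ess_sup_on (~` eball x rho) (fun y => (f y / euc_dist x y `^ t)%:E).
Proof.
apply: (@doubling_le_tail _ _ (fun E f => ess_sup_on E (fun y => (f y)%:E))).
- by move=> E F g h k k0 EF _ _ gh; apply: ess_sup_on_le_scale.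
- move=> z s g s0 g0; apply: ess_sup_on_ge0 => [|y]; last by rewrite lee_fin.
  apply: lt_le_trans (voln_eball_ge z s0); rewrite lte_fin.
  by rewrite exprn_gt0// divr_gt0.
Qed.

End doubling_le_tail_instances.

Section powers.
Context {R : realType}.

Lemma poweR_le_scale (a q : R) (X Y : \bar R) : (0 <= a)%R -> (0 <= q)%R ->
  0 <= X -> 0 <= Y -> X <= a%:E * Y -> X `^ q <= (a `^ q)%:E * Y `^ q.
Proof.
move=> a0 q0 X0 Y0 XY; rewrite -poweR_EFin -poweRM ?lee_fin//.
by apply: gt0_ler_poweR; rewrite // in_itv /= ?leey ?X0 ?mule_ge0 ?lee_fin.
Qed.

Lemma powR_mul_powRN_le (V c rho N s : R) : (0 < c)%R -> (0 < rho)%R -> (0 < N)%R ->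
  (0 <= s)%R -> ((c * rho) `^ N <= V)%R ->
  (rho `^ s * V `^ (- (s / N)) <= c `^ (- s))%R.
Proof.
move=> c0 rho0 N0 s0 V_ge; have crho0 : (0 < c * rho)%R by rewrite mulr_gt0.
have V0 : (0 < V)%R := lt_le_trans (powR_gt0 _ crho0) V_ge.
have : (V `^ (- (s / N)) <= (c * rho) `^ (- s))%R.
  have -> : ((c * rho) `^ (- s) = ((c * rho) `^ N) `^ (- (s / N)))%R.
    by rewrite -powRrM; congr (powR _ _); field; exact: lt0r_neq0.
  rewrite !powRN lef_pV2 ?posrE ?powR_gt0//.
  by apply: ge0_ler_powR; rewrite ?nnegrE ?divr_ge0 ?powR_ge0 ?(ltW N0) ?(ltW V0).
move=> V_le; apply: le_trans (ler_wpM2l (powR_ge0 _ _) V_le) _.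
rewrite powRM ?(ltW c0) ?(ltW rho0)// mulrCA (powRN rho) mulfV ?mulr1//.
by rewrite gt_eqF ?powR_gt0.
Qed.

(* A is the averaged v-term, T the tail term, W the average of w, q = 1/r'. *)
Lemma tail_to_average_bound (V rho c K C N s q e1 e2 : R) (A T W : \bar R) :
  (0 < V)%R -> (0 < rho)%R -> (0 < c)%R -> (0 <= K)%R -> (0 < N)%R -> (0 <= s)%R ->
  0 <= W -> ((c * rho) `^ N <= V)%R -> e2 = (e1 + q - s / N)%R ->
  A <= (K * rho `^ s * V `^ (- q))%:E * T ->
  (V `^ e1)%:E * T <= C%:E * W ->
  (V `^ e2)%:E * A <= (K * c `^ (- s) * Num.max C 0)%:E * W.
Proof.
move=> V0 rho0 c0 K0 N0 s0 W0 V_ge -> AT TW.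
have VD a b : (V `^ (a + b) = V `^ a * V `^ b)%R by rewrite powRD// lt0r_neq0// implybT.
have -> : (V `^ (e1 + q - s / N) = V `^ e1 * V `^ (- (s / N)) * V `^ q)%R.
  by rewrite -!VD; congr (powR _ _); ring.
apply: le_trans (lee_wpmul2l _ AT) _; first by rewrite lee_fin !mulr_ge0 ?powR_ge0.
rewrite muleA -EFinM [X in X%:E](_ : _ = K * (rho `^ s * V `^ (- (s / N))) * V `^ e1)%R;
  last by rewrite (powRN V q); field; rewrite gt_eqF ?powR_gt0.
rewrite EFinM -muleA [in leRHS]EFinM -muleA.
have CW : C%:E * W <= (Num.max C 0)%:E * W by rewrite lee_wpmul2r// lee_fin le_max lexx.
apply: le_trans (lee_wpmul2l _ (le_trans TW CW)) _.
  by rewrite lee_fin !mulr_ge0 ?powR_ge0.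
apply: lee_wpmul2r; first by rewrite mule_ge0// lee_fin le_max lexx orbT.
by rewrite lee_fin ler_wpM2l// powR_mul_powRN_le.
Qed.

Lemma poweR_average_le (V a p s rho : R) (I J : \bar R) :
  (0 < V)%R -> (0 < p)%R -> (0 <= a)%R -> (0 < rho)%R -> 0 <= I -> 0 <= J ->
  I <= (a * rho `^ (p * s))%:E * J ->
  ((V^-1)%:E * I) `^ p^-1 <= (a `^ p^-1 * rho `^ s * V `^ (- p^-1))%:E * J `^ p^-1.
Proof.
move=> V0 p0 a0 rho0 I0 J0 IJ.
have VI : (V^-1)%:E * I <= (V^-1 * (a * rho `^ (p * s)))%:E * J.
  by rewrite EFinM -muleA lee_wpmul2l// lee_fin invr_ge0 ltW.
apply: le_trans (poweR_le_scale _ _ _ J0 VI) _.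
- by rewrite mulr_ge0 ?invr_ge0 ?mulr_ge0 ?powR_ge0 ?(ltW V0).
- by rewrite invr_ge0 ltW.
- by rewrite mule_ge0// lee_fin invr_ge0 ltW.
rewrite powRM ?invr_ge0 ?mulr_ge0 ?powR_ge0 ?(ltW V0)// powRM ?powR_ge0//.
rewrite -powR_inv1 ?(ltW V0)// -!powRrM mulN1r mulrAC mulfV ?gt_eqF// mul1r.
by rewrite mulrC.
Qed.

Lemma conj_exp_cases (r : \bar R) : 1 <= r ->
  (exists2 p : R, conj_exp r = p%:E & (0 < p)%R /\ inv_exp r = (1 - p^-1)%R) \/
  (conj_exp r = +oo /\ inv_exp r = 1%R).
Proof.
case: r => [r| |] //= r1; last by left; exists 1%R; rewrite ?invr1 ?subrr.
rewrite lee_fin in r1; have [->|r_neq1] := eqVneq r 1%R; first by right; rewrite invr1.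
have r_gt1 : (1 < r)%R by rewrite lt_neqAle eq_sym r_neq1.
left; exists (r / (r - 1))%R => //; split; first by rewrite divr_gt0 //; lra.
by rewrite invf_div; field; rewrite gt_eqF //; lra.
Qed.

End powers.

Theorem lemma3p5 (R : realType) (n : nat) (alpha : R) (m : nat)
  (eta delta deltat : R) (r : \bar R) (w v : n.-tuple R -> R) :
  (0 <= alpha)%R -> (alpha < n%:R)%R ->
  (0 < eta)%R -> (eta <= 1)%R ->
  (0 < delta)%R -> (delta < eta)%R ->
  (m <> 0%N -> (delta < (n%:R - alpha) / m%:R)%R) ->
  1 <= r ->
  (deltat <= delta)%R ->
  (* (w, v) are weights: nonnegative, measurable, locally integrable *)
  (forall y, 0 <= w y)%R -> measurable_fun setT w ->
  (forall (x : n.-tuple R) (rho : R), intn_on (eball x rho) (fun y => (w y)%:E) < +oo) ->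
  (forall y, 0 <= v y)%R -> measurable_fun setT v ->
  (forall (x : n.-tuple R) (rho : R), intn_on (eball x rho) (fun y => (v y)%:E) < +oo) ->
  (* v^{r'} satisfies a doubling condition *)
  (exists C : R, forall (x : n.-tuple R) (rho : R), (0 < rho)%R ->
     match conj_exp r with
     | EFin p => intn_on (eball x (2 * rho)) (fun y => (v y `^ p)%:E)
                 <= C%:E * intn_on (eball x rho) (fun y => (v y `^ p)%:E)
     | _ => ess_sup_on (eball x (2 * rho)) (fun y => (v y)%:E)
            <= C%:E * ess_sup_on (eball x rho) (fun y => (v y)%:E)
     end) ->
  (* hypothesis of the lemma, alphat = m * delta + alpha *)
  (exists C : R, forall (x : n.-tuple R) (rho : R), (0 < rho)%R ->
     (fine (voln (eball x rho)) `^ ((delta - deltat) / n%:R))%:E *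
     (match conj_exp r with
      | EFin p => (intn_on (~` eball x rho)
                    (fun y => (v y `^ p /
                      euc_dist x y `^ (p * (n%:R - (m%:R * delta + alpha) + delta)))%:E))
                  `^ p^-1
      | _ => ess_sup_on (~` eball x rho)
               (fun y => (v y / euc_dist x y `^ (n%:R - (m%:R * delta + alpha) + delta))%:E)
      end)
     <= C%:E * (intn_on (eball x rho) (fun y => (w y)%:E)
                * ((fine (voln (eball x rho)))^-1)%:E)) ->
  exists C' : R, forall (x : n.-tuple R) (rho : R), (0 < rho)%R ->
     (fine (voln (eball x rho))
        `^ (((m%:R * delta + alpha) - deltat) / n%:R - inv_exp r))%:E *
     (match conj_exp r with
      | EFin p => (((fine (voln (eball x rho)))^-1)%:E *
                   intn_on (eball x rho) (fun y => (v y `^ p)%:E)) `^ p^-1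
      | _ => ess_sup_on (eball x rho) (fun y => (v y)%:E)
      end)
     <= C'%:E * (intn_on (eball x rho) (fun y => (w y)%:E)
                 * ((fine (voln (eball x rho)))^-1)%:E).
Proof.
move=> alpha0 alpha_lt _ _ delta0 _ delta_lt r1 _ w0 _ _ v0 _ _ [Cd dbl] [C hyp].
case: n w v w0 v0 alpha_lt delta_lt hyp dbl => [|n] w v w0 v0 alpha_lt delta_lt hyp dbl.
  by move: alpha_lt; rewrite ltNge alpha0.
set N := n.+1%:R%R; set alphat := (m%:R * delta + alpha)%R; set s := (N - alphat + delta)%R.
have N0 : (0 < N)%R by rewrite ltr0n.
have s0 : (0 < s)%R.
  suff : (alphat < N)%R by rewrite /s; lra.
  rewrite /alphat; have [->|m0] := eqVneq m 0%N; first by rewrite mul0r add0r.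
  by move: (delta_lt (elimN eqP m0)); rewrite ltr_pdivlMr ?ltr0n ?lt0n// mulrC; lra.
have expE q : inv_exp r = (1 - q)%R ->
    ((alphat - deltat) / N - inv_exp r = (delta - deltat) / N + q - s / N)%R.
  by move=> ->; rewrite /s; field; exact: lt0r_neq0.
have NV0 : (0 < N^-1)%R by rewrite invr_gt0.
have W0 (x : n.+1.-tuple R) rho : 0 <= intn_on (eball x rho) (fun y => (w y)%:E) *
                                      ((fine (voln (eball x rho)))^-1)%:E.
  by apply: intn_on_average_ge0 => y; rewrite lee_fin.
case: (conj_exp_cases r1) => [[p hp [p0 hinv]]|[hp hinv]]; rewrite hp in hyp dbl *.
- exists ((Num.max Cd 0 ^+ 2 * 3 `^ (p * s)) `^ p^-1 * N^-1 `^ (- s) * Num.max C 0)%R.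
  move=> x rho rho0; have V0 := fine_voln_eball_gt0 x rho0.
  apply: (tail_to_average_bound V0 rho0 NV0 _ N0 (ltW s0) (W0 x rho)
    (fine_voln_eball_ge x rho0) (expE _ hinv) _ (hyp x rho rho0)); first exact: powR_ge0.
  apply: (poweR_average_le V0 p0 _ rho0).
  + by rewrite mulr_ge0 ?powR_ge0 ?exprn_ge0// le_max lexx orbT.
  + by apply: intn_on_ge0 => y; rewrite lee_fin powR_ge0.
  + by apply: intn_on_ge0 => y; rewrite lee_fin divr_ge0 ?powR_ge0.
  + apply: intn_on_doubling_le_tail => // [|y]; last exact: powR_ge0.
    by rewrite mulr_ge0 ?(ltW p0) ?(ltW s0).
- exists (Num.max Cd 0 ^+ 2 * 3 `^ s * N^-1 `^ (- s) * Num.max C 0)%R => x rho rho0.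
  apply: (tail_to_average_bound (fine_voln_eball_gt0 x rho0) rho0 NV0 _ N0 (ltW s0)
    (W0 x rho) (fine_voln_eball_ge x rho0) (expE 0%R _) _ (hyp x rho rho0)).
  + by rewrite mulr_ge0 ?powR_ge0 ?exprn_ge0// le_max lexx orbT.
  + by rewrite hinv subr0.
  by rewrite oppr0 powRr0 mulr1; apply: ess_sup_on_doubling_le_tail => //; exact: ltW.
Qed.
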